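(* (i) Let $J:\tilde{\mathcal{A}}_{\mathbf{k}_0}\to\tilde{\mathcal{A}}_{\mathbf{k}_0}$ be a linear map for which there are complex numbers $c_{\mathbf{j};\mathbf{p}}$ ($\mathbf{j}\ge\mathbf{k}_0$, $\mathbf{p}\in\mathbb{N}^M\setminus\{\mathbf 0\}$) such that for every $\tilde S\in\tilde{\mathcal{A}}_{\mathbf{k}_0}$ and every representation $\tilde S=\sum_{\mathbf{j}\ge\mathbf{k}_0}c_{\mathbf{j}}\mu_{\mathbf{j}}$ one has $J\tilde S=\sum_{\mathbf{j}\ge\mathbf{k}_0}c_{\mathbf{j}}\sum_{\mathbf{p}\in\mathbb{N}^M\setminus\{0\}}c_{\mathbf{j};\mathbf{p}}\mu_{\mathbf{j}+\mathbf{p}}$. Then for every $\tilde S_0\in\tilde{\mathcal{A}}_{\mathbf{k}_0}$ the equation $\tilde S=J\tilde S+\tilde S_0$ has a unique solution $\tilde S\in\tilde{\mathcal{A}}_{\mathbf{k}_0}$. (ii) Let $A\subset\tilde{\mathcal{A}}_{\mathbf{k}_0}$ be nonempty and closed in the asymptotic topology, and let $J:A\to A$ (linear or not) be asymptotically contractive on $A$. Then the equation $\tilde S=J(\tilde S)$ has a unique solution $\tilde S\in A$.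
   Context: $(\mathcal{G},\cdot,\le)$ is a totally ordered abelian group (order compatible with multiplication). Fix $M\ge1$, $\mu_1,\dots,\mu_M\in\mathcal{G}$ with $\mu_i<1$, $\mu_{\mathbf{k}}=\prod_i\mu_i^{k_i}$ for $\mathbf{k}\in\mathbb{Z}^M$; $\mathbb{Z}^M$ has the componentwise order. For $\mathbf{k}_0\in\mathbb{Z}^M$, $\tilde{\mathcal{A}}_{\mathbf{k}_0}$ is the set of formal sums $\sum_{\mathbf{k}\ge\mathbf{k}_0}c_{\mathbf{k}}\mu_{\mathbf{k}}$ ($c_{\mathbf{k}}\in\mathbb{C}$), two formal sums being identified iff for each $g\in\mathcal{G}$ the finite sums $\sum_{\mathbf{k}\ge\mathbf{k}_0,\mu_{\mathbf{k}}=g}c_{\mathbf{k}}$ coincide (the coefficient of $g$); addition is coefficientwise. A formal expression $\sum_{\mathbf{k}\ge\mathbf{k}_0}\sum_{\mathbf{p}\in\mathbb{N}^M\setminus\{0\}}a_{\mathbf{k},\mathbf{p}}\mu_{\mathbf{k}+\mathbf{p}}$ denotes the element whose coefficient of $g$ is the (finite) sum of $a_{\mathbf{k},\mathbf{p}}$ over $\mu_{\mathbf{k}+\mathbf{p}}=g$. Asymptotic topology: a sequence converges iff for each $g\in\mathcal{G}$ its coefficient of $g$ is eventually constant; closed means sequentially closed. A map $J:A\to A$ is asymptotically contractive on $A$ if for all $f_1,f_2\in A$ and every representation $f_1-f_2=\sum_{\mathbf{k}\ge\mathbf{k}_0}c_{\mathbf{k}}\mu_{\mathbf{k}}$ there exist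 complex numbers $C_{\mathbf{k};\mathbf{p}}$ ($\mathbf{k}\ge\mathbf{k}_0$, $\mathbf{p}\in\mathbb{N}^M\setminus\{0\}$), possibly depending on $f_1,f_2$, such that $J(f_1)-J(f_2)=\sum_{\mathbf{k}\ge\mathbf{k}_0}c_{\mathbf{k}}\sum_{\mathbf{p}\in\mathbb{N}^M\setminus\{0\}}C_{\mathbf{k};\mathbf{p}}\mu_{\mathbf{k}+\mathbf{p}}$. *)

From HB Require Import structures.
From mathcomp Require Import all_boot all_order all_algebra.
From mathcomp Require Import boolp classical_sets fsbigop reals.
From mathcomp Require Export complex.
Set Implicit Arguments. Unset Strict Implicit. Unset Printing Implicit Defensive.
Import Order.TTheory GRing.Theory Num.Theory.
Local Open Scope ring_scope.
Local Open Scope classical_set_scope.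

(* The group G is written ADDITIVELY: a zmodType G (abelian group) with a
   relation [le] which is a total order compatible with the group law.
   The identity "1" of the paper is 0 here, mu_i < 1 becomes mu_i < 0,
   and mu_k = prod_i mu_i^(k_i) becomes sum_i k_i * mu_i. *)
Definition ordered_abelian_group (G : zmodType) (le : rel G) : Prop :=
  [/\ reflexive le, antisymmetric le, transitive le, total le
    & forall x y z : G, le x y -> le (x + z) (y + z)].

Definition lt_of (G : zmodType) (le : rel G) (x y : G) : Prop :=
  le x y /\ x <> y.

Definition idx (M : nat) := {ffun 'I_M -> int}.

Definition idx_le (M : nat) (k l : idx M) : Prop := forall i, (k i <= l i)%R.

Definition idx_add (M : nat) (k l : idx M) : idx M := [ffun i => k i + l i].

Definition idx0 (M : nat) : idx M := [ffun _ => 0%R].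

Definition muk (G : zmodType) (M : nat) (mus : 'I_M -> G) (k : idx M) : G :=
  \sum_(i < M) (mus i) *~ (k i).

Section Series.
Variables (R : realType) (G : zmodType) (M : nat) (mus : 'I_M -> G) (k0 : idx M).
Local Notation C := R[i].

(* coefficient of g in the formal sum  sum_{k >= k0} c_k mu_k
   (a finite sum, cf. the paper) *)
Definition fcoef (c : idx M -> C) (g : G) : C :=
  \sum_(k \in [set k : idx M | idx_le k0 k /\ muk mus k = g]) c k.

(* coefficient of g in the formal expression
   sum_{k >= k0} sum_{p in N^M \ 0} a_{k,p} mu_{k+p} *)
Definition fcoef2 (a : idx M -> idx M -> C) (g : G) : C :=
  \sum_(kp \in [set kp : idx M * idx M | idx_le k0 kp.1 /\ idx_le (idx0 M) kp.2
                   /\ kp.2 <> idx0 M /\ muk mus (idx_add kp.1 kp.2) = g])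
     a kp.1 kp.2.

(* An element of tilde A_{k0} is identified with its coefficient function
   G -> C; tilde A_{k0} is the set of coefficient functions of formal sums. *)
Definition Atilde : set (G -> C) := [set f | exists c, f = fcoef c].

Definition asym_cvg (u : nat -> G -> C) (f : G -> C) : Prop :=
  forall g, exists N, forall n, (N <= n)%N -> u n g = f g.

Definition asym_closed (A : set (G -> C)) : Prop :=
  forall (u : nat -> G -> C) (f : G -> C),
    (forall n, A (u n)) -> Atilde f -> asym_cvg u f -> A f.

Definition asym_contractive (A : set (G -> C)) (J : (G -> C) -> (G -> C)) : Prop :=
  forall f1 f2, A f1 -> A f2 ->
  forall c : idx M -> C, (fun g => f1 g - f2 g) = fcoef c ->
  exists Cc : idx M -> idx M -> C,
    (fun g => J f1 g - J f2 g) = fcoef2 (fun k p => c k * Cc k p).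

End Series.

(* Measure a multi-index k >= k0 by its degree deg k = sum_i (k i - k0 i).
   Because every mu_i is negative, each fibre {k >= k0 | mu_k = g} has bounded
   degree (even in a non-archimedean group), so a coefficient function that
   vanishes below a large enough degree contributes nothing to the coefficient
   of g. An asymptotically contractive map raises by one the degree below which
   the coefficients of a difference vanish. Hence the Picard iterates J^n f0
   stabilise coefficientwise; their limit lies in the closed set A and is a fixed
   point, and two fixed points agree to every order, hence everywhere. Part (i)
   is part (ii) for A the whole space and the affine map S |-> J S + S0. *)

From Pilot Require Import Defs.
From HB Require Import structures.
From mathcomp Require Import all_boot all_order all_algebra.
From mathcomp Require Import boolp classical_sets fsbigop reals cardinality.
From mathcomp Require Import complex zify.
Import Order.TTheory GRing.Theory Num.Theory.
Local Open Scope ring_scope.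
Local Open Scope classical_set_scope.
Set Implicit Arguments. Unset Strict Implicit.

Lemma ex_uniform_bound (B : nat -> nat -> Prop) :
  (forall t D D', (D <= D')%N -> B t D -> B t D') ->
  (forall t, exists D, B t D) -> forall T, exists D, forall t, (t < T)%N -> B t D.
Proof.
move=> Bmono Bex; elim=> [|T [D HD]]; first by exists 0%N.
have [D' HD'] := Bex T; exists (maxn D D') => t.
rewrite ltnS leq_eqVlt => /orP[/eqP->|ltT].
- by apply: Bmono HD'; rewrite leq_maxr.
- by apply: Bmono (HD _ ltT); rewrite leq_maxl.
Qed.

Section OrderedGroup.
Variables (G : zmodType) (le : rel G) (HG : ordered_abelian_group le).

Lemma og_refl x : le x x. Proof. by case: HG. Qed.

Lemma og_trans x y z : le x y -> le y z -> le x z.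
Proof. by case: HG => _ _ t _ _; apply: t. Qed.

Lemma og_anti x y : le x y -> le y x -> x = y.
Proof. by case: HG => _ a _ _ _ h1 h2; apply: a; rewrite h1 h2. Qed.

Lemma og_total x y : le x y \/ le y x.
Proof. by case: HG => _ _ _ t _; apply/orP. Qed.

Lemma og_addr x y z : le x y -> le (x + z) (y + z).
Proof. by case: HG => _ _ _ _; apply. Qed.

Lemma og_addl x y z : le x y -> le (z + x) (z + y).
Proof. by rewrite ![z + _]addrC; apply: og_addr. Qed.

Lemma og_add a b c d : le a b -> le c d -> le (a + c) (b + d).
Proof. by move=> h1 h2; apply: og_trans (og_addr c h1) (og_addl b h2). Qed.

Lemma og_sum n (F H : 'I_n -> G) :
  (forall i, le (F i) (H i)) -> le (\sum_(i < n) F i) (\sum_(i < n) H i).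
Proof.
by move=> h; elim/big_ind2: _ => //; [apply: og_refl | move=> *; apply: og_add].
Qed.

Lemma og_mulrn x y n : le x y -> le (x *+ n) (y *+ n).
Proof.
move=> h; elim: n => [|n IH]; first by rewrite !mulr0n og_refl.
by rewrite !mulrS; apply: og_add.
Qed.

Lemma og_mulrn_le0 x n : le x 0 -> le (x *+ n) 0.
Proof. by move=> /(og_mulrn n); rewrite mul0rn. Qed.

Lemma og_mulrn_decr x m n : le x 0 -> (m <= n)%N -> le (x *+ n) (x *+ m).
Proof.
move=> x_le0 lemn; rewrite -(subnKC lemn) mulrnDr -{2}[x *+ m]addr0.
exact/og_addl/og_mulrn_le0.
Qed.

Lemma og_addr_neg x m : lt_of le m 0 -> ~ le x (x + m).
Proof.
move=> [m_le0 m_neq0] /(og_addl (- x)); rewrite addKr addNr => /og_anti /(_ m_le0).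
by move/esym.
Qed.

Lemma og_argmin n (f : 'I_n.+1 -> G) : exists j, forall i, le (f j) (f i).
Proof.
elim: n f => [|n IH] f; first by exists ord0 => i; rewrite (ord1 i) og_refl.
have [j' Hj'] := IH (fun i => f (lift ord0 i)).
have [h|h] := og_total (f ord0) (f (lift ord0 j')).
- exists ord0 => i; case: (unliftP ord0 i) => [i' ->|->]; last exact: og_refl.
  exact: og_trans h (Hj' i').
- by exists (lift ord0 j') => i; case: (unliftP ord0 i) => [i' ->|->].
Qed.

Definition bounded_fibres n (mu : 'I_n -> G) :=
  forall h, exists D, forall p : 'I_n -> nat,
    \sum_(i < n) mu i *+ p i = h -> (\sum_(i < n) p i <= D)%N.

(* Induction on n, splitting off the most negative mu_j: either some multiple
   mu_j *+ T lies below h, which bounds p_j by T, or none does, and then h has no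
   representation at all. *)
Lemma bounded_fibres_neg n (mu : 'I_n -> G) :
  (forall i, lt_of le (mu i) 0) -> bounded_fibres mu.
Proof.
elim: n mu => [|n IH] mu mu_lt0 h; first by exists 0%N => p _; rewrite big_ord0.
have [j mu_min] := og_argmin mu.
have rest_le0 (p : 'I_n -> nat) : le (\sum_(i < n) mu (lift j i) *+ p i) 0.
  have sum0 : (0 : G) = \sum_(i < n) (0 : G) by rewrite big1.
  rewrite [X in le _ X]sum0.
  by apply: og_sum => i; apply: og_mulrn_le0; case: (mu_lt0 (lift j i)).
have [[T hT]|hT] := pselect (exists T, ~ le h (mu j *+ T)); last first.
  exists 0%N => p hp; exfalso; set S := (\sum_(i < n.+1) p i)%N.
  have S_le : le (mu j *+ S) h.
    by rewrite -hp /S -sumrMnr; apply: og_sum => i; apply: og_mulrn.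
  apply: (@og_addr_neg (mu j *+ S) _ (mu_lt0 j)); rewrite -mulrSr.
  by apply: og_trans S_le _; apply: contrapT => nle; apply: hT; exists S.+1.
have IH' t := IH _ (fun i => mu_lt0 (lift j i)) (h - mu j *+ t).
have [D HD] := ex_uniform_bound
  (fun t D D' leD hD p hp => leq_trans (hD p hp) leD) IH' T.
exists (T + D)%N => p hp.
rewrite (bigD1_ord j) //=; rewrite (bigD1_ord j) //= in hp.
have pj_lt : (p j < T)%N.
  rewrite ltnNge; apply/negP => le_Tp; apply: hT.
  apply: og_trans (og_mulrn_decr _ le_Tp); last by case: (mu_lt0 j).
  by rewrite -hp -{2}[mu j *+ p j]addr0; apply/og_addl/rest_le0.
apply: leq_add; first exact: ltnW.
by apply: (HD _ pj_lt (fun i => p (lift j i))); rewrite -hp addrAC subrr add0r.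
Qed.

End OrderedGroup.

Section AsymptoticSeries.
Variables (R : realType) (G : zmodType) (le : rel G)
  (HG : ordered_abelian_group le) (M : nat)
  (mus : 'I_M -> G) (mus_lt0 : forall i, lt_of le (mus i) 0) (k0 : idx M).
Local Notation C := R[i].
Local Notation fcoef := (fcoef mus k0).
Local Notation Atilde := (Atilde mus k0).

Definition deg (k : idx M) : int := \sum_(i < M) (k i - k0 i).

Definition fibre (g : G) := [set k : idx M | idx_le k0 k /\ muk mus k = g].

Definition deg_le_set (D : nat) := [set k : idx M | idx_le k0 k /\ deg k <= D%:Z].

Lemma deg_ge0 k : idx_le k0 k -> 0 <= deg k.
Proof. by move=> hk; apply: sumr_ge0 => i _; rewrite subr_ge0. Qed.

Lemma deg_ge_coord k i : idx_le k0 k -> k i - k0 i <= deg k.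
Proof.
move=> hk; rewrite /deg (bigD1 i) //= lerDl sumr_ge0 // => j _.
by rewrite subr_ge0.
Qed.

Lemma deg_natE k : idx_le k0 k -> deg k = (\sum_(i < M) `|k i - k0 i|%N)%:Z.
Proof.
move=> hk; rewrite /deg (big_morph Posz PoszD (erefl _)).
by apply: eq_bigr => i _; rewrite gez0_abs // subr_ge0.
Qed.

Lemma muk_shift k : idx_le k0 k ->
  muk mus k = muk mus k0 + \sum_(i < M) mus i *+ `|k i - k0 i|%N.
Proof.
move=> hk; rewrite /muk -big_split; apply: eq_bigr => i _ /=.
by rewrite pmulrn gez0_abs ?subr_ge0 // -mulrzDr [k0 i + _]addrC subrK.
Qed.

Lemma fibre_deg_bounded g : exists D : nat, forall k, fibre g k -> deg k <= D%:Z.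
Proof.
have [D HD] := bounded_fibres_neg HG mus_lt0 (g - muk mus k0).
exists D => k [hk hg]; rewrite deg_natE // lez_nat; apply: HD.
by rewrite -hg muk_shift // [muk mus k0 + _]addrC addrK.
Qed.

Lemma deg_le_set_finite D : finite_set (deg_le_set D).
Proof.
pose emb (q : {ffun 'I_M -> 'I_D.+1}) : idx M := [ffun i => k0 i + (q i : nat)%:Z].
apply: (sub_finite_set _ (finite_image emb (@finite_finset _ setT))).
move=> k [hk hd]; exists [ffun i => inord `|k i - k0 i|%N] => //.
apply/ffunP => i; rewrite !ffunE inordK; last first.
  by have := deg_ge_coord i hk; have := hk i; lia.
by rewrite gez0_abs ?subr_ge0 // [k0 i + _]addrC subrK.
Qed.

Lemma fibre_finite g : finite_set (fibre g).
Proof.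
have [D HD] := fibre_deg_bounded g; apply: sub_finite_set (deg_le_set_finite D).
by move=> k hk; split; [case: hk | exact: HD].
Qed.

Lemma fcoef_comb (a : C) (c1 c2 : idx M -> C) g :
  fcoef (fun k => a * c1 k + c2 k) g = a * fcoef c1 g + fcoef c2 g.
Proof.
by rewrite /Defs.fcoef !(fsbig_finite _ _ (fibre_finite g)) big_split /= mulr_sumr.
Qed.

Lemma fcoefB (c1 c2 : idx M -> C) g :
  fcoef (fun k => c1 k - c2 k) g = fcoef c1 g - fcoef c2 g.
Proof.
rewrite addrC -mulN1r -fcoef_comb /Defs.fcoef.
by apply: eq_fsbigr => k _; rewrite mulN1r addrC.
Qed.

Lemma Atilde_comb (a : C) (f1 f2 : G -> C) : Atilde f1 -> Atilde f2 ->
  Atilde (fun g => a * f1 g + f2 g).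
Proof.
move=> [c1 ->] [c2 ->]; exists (fun k => a * c1 k + c2 k).
by apply: funext => g; rewrite fcoef_comb.
Qed.

Definition vanish_below (n : nat) (c : idx M -> C) :=
  forall k, idx_le k0 k -> deg k < n%:Z -> c k = 0.

Lemma vanish_below0 c : vanish_below 0 c.
Proof. by move=> k hk; have := deg_ge0 hk; lia. Qed.

Lemma fcoef_vanish_below n c g D : vanish_below n c ->
  (forall k, fibre g k -> deg k <= D%:Z) -> (D < n)%N -> fcoef c g = 0.
Proof.
move=> hc hD ltDn; apply: fsbig1 => k [hk hg].
by apply: hc => //; have := hD k (conj hk hg); lia.
Qed.

Definition fibre2 g := [set kp : idx M * idx M | idx_le k0 kp.1 /\
  idx_le (idx0 M) kp.2 /\ kp.2 <> idx0 M /\ muk mus (idx_add kp.1 kp.2) = g].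

Lemma deg_add k p : deg (idx_add k p) = deg k + \sum_(i < M) p i.
Proof. by rewrite /deg -big_split; apply: eq_bigr => i _; rewrite ffunE addrAC. Qed.

Lemma idx_sum_gt0 p : idx_le (idx0 M) p -> p <> idx0 M -> 0 < \sum_(i < M) p i.
Proof.
move=> p_ge0 p_neq0; have p_ge0' j : 0 <= p j by have := p_ge0 j; rewrite ffunE.
have [i pi_neq0] : exists i, p i != 0.
  apply: contrapT => all0; apply: p_neq0; apply/ffunP => i; rewrite ffunE.
  by apply/eqP/negbNE/negP => pi_neq0; apply: all0; exists i.
rewrite (bigD1 i) //= (@lt_le_trans _ _ (p i)) ?lt0r ?pi_neq0 ?p_ge0' //.
by rewrite lerDl sumr_ge0.
Qed.

Lemma fibre2_finite g : finite_set (fibre2 g).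
Proof.
have [D HD] := fibre_deg_bounded g.
apply: (sub_finite_set _ (finite_setX (deg_le_set_finite D)
  (finite_image (fun x : idx M * idx M => [ffun i => x.2 i - x.1 i] : idx M)
    (finite_setX (deg_le_set_finite D) (deg_le_set_finite D))))).
move=> [k p] [/= hk [hp [p_neq0 hg]]].
have hkp : idx_le k0 (idx_add k p).
  by move=> i; rewrite ffunE; have := hp i; rewrite ffunE; have := hk i; lia.
have := HD _ (conj hkp hg); rewrite deg_add; have := idx_sum_gt0 hp p_neq0 => hp_gt0 hd.
split => /=; first by split => //; lia.
exists (k, idx_add k p); first by split; split => //=; rewrite ?deg_add; lia.
by apply/ffunP => i; rewrite !ffunE /= addrC addKr.
Qed.

(* Reindexes an fcoef2 sum by m = k + p, turning it into an fcoef sum. *)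
Definition collect (a : idx M -> idx M -> C) (m : idx M) : C :=
  \sum_(x \in fibre2 (muk mus m)) (if idx_add x.1 x.2 == m then a x.1 x.2 else 0).

Lemma fcoef2_collect a : fcoef2 mus k0 a = fcoef (collect a).
Proof.
apply: funext => g.
transitivity (\sum_(m \in fibre g) \sum_(x \in fibre2 g)
   (if idx_add x.1 x.2 == m then a x.1 x.2 else 0)); last first.
  by apply: eq_fsbigr => m /set_mem [_ hg]; rewrite /collect hg.
rewrite exchange_fsbig; [|exact: fibre_finite|exact: fibre2_finite].
symmetry; apply: eq_fsbigr => x /set_mem [hk [hp [_ hg]]].
have hkp : fibre g (idx_add x.1 x.2).
  split=> // i; rewrite ffunE -[k0 i]addr0; apply: lerD (hk i) _.
  by have := hp i; rewrite ffunE.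
rewrite (fsbigD1 (idx_add x.1 x.2) _ _ (fibre_finite g) hkp) eqxx fsbig1 /=.
  by rewrite addr0.
by move=> m [_ m_neq]; rewrite ifF //; apply/eqP => e; apply: m_neq; rewrite e.
Qed.

Lemma vanish_below_collect n c Cc :
  vanish_below n c -> vanish_below n.+1 (collect (fun k p => c k * Cc k p)).
Proof.
move=> hc m hm hdm; apply: fsbig1 => x [hk [hp [p_neq0 _]]].
case: eqP => [e|//]; rewrite hc ?mul0r //.
move: hdm; rewrite -e deg_add; have := idx_sum_gt0 hp p_neq0.
set s := (\sum_(i < M) _); set d := deg _; lia.
Qed.

Definition agree (n : nat) (f1 f2 : G -> C) :=
  exists c, (fun g => f1 g - f2 g) = fcoef c /\ vanish_below n c.

Lemma agree0 f1 f2 : Atilde f1 -> Atilde f2 -> agree 0 f1 f2.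
Proof.
move=> [c1 ->] [c2 ->]; exists (fun k => c1 k - c2 k); split; last exact: vanish_below0.
by apply: funext => g; rewrite fcoefB.
Qed.

Lemma agree_eq n f1 f2 g D : agree n f1 f2 ->
  (forall k, fibre g k -> deg k <= D%:Z) -> (D < n)%N -> f1 g = f2 g.
Proof.
move=> [c [e hc]] hD ltDn; apply/eqP; rewrite -subr_eq0.
by have := fcoef_vanish_below hc hD ltDn; rewrite -e => ->.
Qed.

Lemma agree_all f1 f2 : (forall n, agree n f1 f2) -> f1 = f2.
Proof.
move=> h; apply: funext => g; have [D HD] := fibre_deg_bounded g.
exact: agree_eq HD (ltnSn D).
Qed.

Lemma agree_cvg (u : nat -> G -> C) f : (forall n, agree n f (u n)) -> asym_cvg u f.
Proof.
move=> hu g; have [D HD] := fibre_deg_bounded g.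
by exists D.+1 => n hn; apply/esym/(agree_eq (hu n) HD).
Qed.

Lemma coef_limit (e : nat -> idx M -> C) :
  (forall n, vanish_below n (fun m => e n.+1 m - e n m)) ->
  exists cinf, forall n, vanish_below n (fun m => cinf m - e n m).
Proof.
move=> he; exists (fun m => e `|deg m|.+1 m) => n m hm hdm.
have stab a b : deg m < a%:Z -> (a <= b)%N -> e b m = e a m.
  move=> hlt; elim: b => [|b IH]; first by rewrite leqn0 => /eqP->.
  rewrite leq_eqVlt ltnS => /orP[/eqP->//|hab]; rewrite -(IH hab).
  by apply/eqP; rewrite -subr_eq0; apply/eqP/he => //; lia.
have hN : deg m < `|deg m|.+1%:Z by have := deg_ge0 hm; lia.
case: (leqP `|deg m|.+1 n) => hn /=.
- by rewrite (stab _ _ hN hn) subrr.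
- by rewrite (stab _ _ hdm (ltnW hn)) subrr.
Qed.

Lemma agree_limit (u : nat -> G -> C) : (forall n, Atilde (u n)) ->
  (forall n, agree n (u n.+1) (u n)) -> exists2 f, Atilde f & forall n, agree n f (u n).
Proof.
move=> Au hu; have [d hd] := choice hu; have [c0 ec0] := Au 0%N.
pose e n m := c0 m + \sum_(j < n) d j m.
have u_e n : u n = fcoef (e n).
  elim: n => [|n IH].
    by rewrite ec0; congr Defs.fcoef; apply: funext => m; rewrite /e big_ord0 addr0.
  have e_S : e n.+1 = (fun m => 1 * d n m + e n m).
    by apply: funext => m; rewrite /e big_ord_recr mul1r addrA addrC.
  apply: funext => g; rewrite e_S fcoef_comb mul1r -IH -(hd n).1 /=.
  by rewrite subrK.
have [cinf hcinf] : exists cinf, forall n, vanish_below n (fun m => cinf m - e n m).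
  apply: coef_limit => n m hm hdm /=.
  by rewrite /e big_ord_recr /= addrA [X in X - _]addrC addrK; apply: (hd n).2.
exists (fcoef cinf); first by exists cinf.
move=> n; exists (fun m => cinf m - e n m); split => //.
by apply: funext => g; rewrite u_e fcoefB.
Qed.

Section Contraction.
Variables (A : set (G -> C)) (J : (G -> C) -> (G -> C)).
Hypotheses (A_sub : A `<=` Atilde) (A_closed : asym_closed mus k0 A)
  (JA : forall S, A S -> A (J S)) (J_contr : asym_contractive mus k0 A J).

Lemma agree_contr n f1 f2 : A f1 -> A f2 -> agree n f1 f2 -> agree n.+1 (J f1) (J f2).
Proof.
move=> h1 h2 [c [e hc]]; have [Cc eJ] := J_contr h1 h2 e.
exists (collect (fun k p => c k * Cc k p)); rewrite eJ fcoef2_collect.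
by split=> //; apply: vanish_below_collect.
Qed.

Lemma A_iter n f : A f -> A (iter n J f).
Proof. by move=> hf; elim: n => //= n IH; apply: JA. Qed.

Lemma agree_iter n f1 f2 : A f1 -> A f2 -> agree n (iter n J f1) (iter n J f2).
Proof.
move=> h1 h2; elim: n => [|n IH]; first exact: agree0 (A_sub h1) (A_sub h2).
exact: agree_contr (A_iter _ h1) (A_iter _ h2) IH.
Qed.

Lemma contr_fixpoint_exists : A !=set0 -> exists2 S, A S & S = J S.
Proof.
move=> [f0 Af0]; pose u n := iter n J f0.
have Au n : A (u n) by apply: A_iter.
have [f At_f agree_f] : exists2 f, Atilde f & forall n, agree n f (u n).
  apply: agree_limit => [n|n]; first exact: A_sub.
  by rewrite /u iterSr; apply: agree_iter (JA Af0) Af0.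
have Af : A f by apply: A_closed Au At_f (agree_cvg agree_f).
exists f => //; apply: funext => g; have [D HD] := fibre_deg_bounded g.
have J_agree : agree D.+2 (J f) (u D.+2) by apply: agree_contr (agree_f D.+1).
have ltD := ltnW (ltnSn D.+1).
by rewrite (agree_eq (agree_f _) HD ltD) (agree_eq J_agree HD ltD).
Qed.

Lemma contr_fixpoint_unique S1 S2 : A S1 -> A S2 -> S1 = J S1 -> S2 = J S2 -> S1 = S2.
Proof.
move=> h1 h2 fix1 fix2; apply: agree_all => n.
by have := agree_iter n h1 h2; rewrite !iter_fix.
Qed.

Lemma contr_unique_fixpoint : A !=set0 ->
  exists S, [/\ A S, S = J S & forall S', A S' -> S' = J S' -> S' = S].
Proof.
move=> A_ne; have [S AS fixS] := contr_fixpoint_exists A_ne.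
by exists S; split=> // S' AS' fixS'; apply: contr_fixpoint_unique.
Qed.

End Contraction.

Lemma affine_contractive (J : (G -> C) -> (G -> C)) (cc : idx M -> idx M -> C) S0 :
  (forall (a : C) S T, Atilde S -> Atilde T ->
     J (fun g => a * S g + T g) = (fun g => a * J S g + J T g)) ->
  (forall S c, Atilde S -> S = fcoef c -> J S = fcoef2 mus k0 (fun j p => c j * cc j p)) ->
  asym_contractive mus k0 Atilde (fun S g => J S g + S0 g).
Proof.
move=> J_lin J_rep f1 f2 h1 h2 c ec; exists cc.
have ec' : (fun g => -1 * f2 g + f1 g) = fcoef c.
  by rewrite -ec; apply: funext => g; rewrite mulN1r addrC.
rewrite -(J_rep _ c (Atilde_comb _ h2 h1) ec') J_lin //; apply: funext => g.
by rewrite mulN1r opprD addrACA subrr addr0 addrC.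
Qed.

End AsymptoticSeries.

Theorem mainTheorem6 (R : realType) (G : zmodType) (le : rel G)
  (HG : ordered_abelian_group le) (M : nat) (HM : (1 <= M)%N)
  (mus : 'I_M -> G) (Hmus : forall i, lt_of le (mus i) 0) (k0 : idx M) :
  (* (i) *)
  (forall J : (G -> R[i]) -> (G -> R[i]),
     (forall S, Atilde mus k0 S -> Atilde mus k0 (J S)) ->
     (forall (a : R[i]) S T, Atilde mus k0 S -> Atilde mus k0 T ->
        J (fun g => a * S g + T g) = (fun g => a * J S g + J T g)) ->
     (exists cc : idx M -> idx M -> R[i],
        forall S (c : idx M -> R[i]), Atilde mus k0 S -> S = fcoef mus k0 c ->
          J S = fcoef2 mus k0 (fun j p => c j * cc j p)) ->
     forall S0, Atilde mus k0 S0 ->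
       exists S, [/\ Atilde mus k0 S, S = (fun g => J S g + S0 g)
         & forall S', Atilde mus k0 S' -> S' = (fun g => J S' g + S0 g) -> S' = S])
  /\
  (* (ii) *)
  (forall (A : set (G -> R[i])) (J : (G -> R[i]) -> (G -> R[i])),
     A `<=` Atilde mus k0 -> A !=set0 -> asym_closed mus k0 A ->
     (forall S, A S -> A (J S)) -> asym_contractive mus k0 A J ->
     exists S, [/\ A S, S = J S & forall S', A S' -> S' = J S' -> S' = S]).
Proof.
split=> [J JA J_lin [cc J_rep] S0 AS0 | A J A_sub A_ne A_closed JA J_contr].
- have AJ S : Atilde mus k0 S -> Atilde mus k0 (fun g => J S g + S0 g).
    move=> AS; have := Atilde_comb HG Hmus 1 (JA S AS) AS0.
    by congr Atilde; apply: funext => g; rewrite mul1r.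
  have J_contr := affine_contractive HG Hmus S0 J_lin J_rep.
  by apply: (contr_unique_fixpoint HG Hmus _ _ AJ J_contr); last exists S0.
- exact: (contr_unique_fixpoint HG Hmus A_sub A_closed JA J_contr A_ne).
Qed.
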